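(* Let $p_1,\dots,p_\theta\ge0$ with $\sum_i p_i=1$. Then \[ \mathbb E\Big[\prod_{\gamma\in\mathcal C(\omega)}\Big(\sum_{i=1}^\theta p_i^{|\gamma|}\Big)\Big]=\sum_{\lambda\vdash n}\binom{n}{\lambda}\Big(\sum_{\kappa\in K(\lambda)}\prod_{i=1}^\theta p_i^{\kappa_i}\Big)\sum_{\sigma\in\mathcal T_\lambda}f(\sigma). \]
   Context: Fix $\theta\in\{2,3,\dots\}$, $\beta>0$. Let $V=\{1,\dots,n\}$, $E$ the set of unordered pairs of distinct elements of $V$. Under $\mathbb P$ (expectation $\mathbb E$), let $\omega=(\omega_{xy}:xy\in E)$ be independent rate-1 Poisson point processes on $[0,\beta/n]$, and $\sigma(\omega)\in\mathcal S_n$ the time-ordered composition of the transpositions $(x,y)$ over all points $t\in\omega_{xy}$. $\mathcal C(\omega)$ is the set of cycles of $\sigma(\omega)$ (including fixed points), $|\gamma|$ the size of cycle $\gamma$, and $f(\sigma)=\mathbb P(\sigma(\omega)=\sigma)$. A composition of $n$ is a vector $\kappa=(\kappa_1,\dots,\kappa_\theta)$ of nonnegative integers with $\sum\kappa_j=n$; it is a partition, written $\lambda\vdash n$, if moreover $\lambda_1\ge\dots\ge\lambda_\theta$ (so partitions have exactly $\theta$ entries, some possibly $0$). $K(\lambda)$ is the set of compositions obtained by reordering the entries of $\lambda$. $\binom{n}{\lambda}=n!/(\lambda_1!\cdots\lambda_\theta!)$. The Young subgroup $\mathcal T_\lambda\subseteq\mathcal S_n$ consists of permutations fixing each of the sets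 $\{1,\dots,\lambda_1\}$, $\{\lambda_1+1,\dots,\lambda_1+\lambda_2\}$, etc. *)

From HB Require Import structures.
From mathcomp Require Import all_boot all_order all_algebra all_fingroup.
From mathcomp Require Import all_classical all_reals all_analysis.
Set Implicit Arguments. Unset Strict Implicit. Unset Printing Implicit Defensive.
Import Order.TTheory GRing.Theory Num.Theory.
Import numFieldNormedType.Exports.
Local Open Scope ring_scope.

(* Edge set E of the complete graph on V = 'I_n: unordered pairs {x,y},
   represented by ordered pairs (x,y) with x < y. *)
Definition edge_set (n : nat) : {set 'I_n * 'I_n} := [set e : 'I_n * 'I_n | (e.1 < e.2)%N].

(* Time-ordered composition of the transpositions of an edge sequence
   e_0, e_1, ..., e_{k-1} (e_0 earliest).  In MathComp (s * t) x = t (s x),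
   so the product applies e_0 first. *)
Definition walk_perm (n k : nat) (e : {ffun 'I_k -> 'I_n * 'I_n}) : {perm 'I_n} :=
  (\prod_(i < k) tperm (e i).1 (e i).2)%g.

Definition walk_count (n k : nat) (s : {perm 'I_n}) : nat :=
  #|[set e : {ffun 'I_k -> 'I_n * 'I_n} |
       [forall i, e i \in edge_set n] && (walk_perm e == s)]|.

(* f(s) = P(sigma(omega) = s) for independent rate-1 Poisson processes on
   the edges over the time interval [0, beta/n].  The superposition has
   N ~ Poisson(|E| beta/n) points, which given N = k carry iid uniform edges
   (and a.s. distinct iid uniform times), so
   f(s) = sum_k e^{-|E| t} (|E| t)^k / k! * walk_count k s / |E|^k,  t = beta/n. *)
Definition fperm (R : realType) (n : nat) (beta : R) (s : {perm 'I_n}) : R :=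
  let t := beta / n%:R in
  let m := (#|edge_set n|)%:R in
  limn (series (fun k : nat =>
     expR (- (m * t)) * (m * t) ^+ k / (k`!)%:R
        * ((walk_count k s)%:R / m ^+ k))).

(* E[ F(sigma(omega)) ] for F a function on permutations: sigma(omega)
   takes finitely many values, so the expectation is the finite sum. *)
Definition Eperm (R : realType) (n : nat) (beta : R) (F : {perm 'I_n} -> R) : R :=
  \sum_(s : {perm 'I_n}) fperm beta s * F s.

Definition is_composition (theta n : nat) (k : {ffun 'I_theta -> 'I_n.+1}) : bool :=
  (\sum_(i < theta) (k i : nat) == n)%N.

(* Partitions lambda |- n with exactly theta (possibly zero) entries. *)
Definition is_partition (theta n : nat) (l : {ffun 'I_theta -> 'I_n.+1}) : bool :=
  is_composition l && [forall i : 'I_theta, forall j : 'I_theta,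
                         ((i <= j)%N ==> (l j <= l i)%N)].

Definition Kset (theta n : nat) (l : {ffun 'I_theta -> 'I_n.+1})
  : {set {ffun 'I_theta -> 'I_n.+1}} :=
  [set k : {ffun 'I_theta -> 'I_n.+1} | [exists s : {perm 'I_theta}, [forall i, k i == l (s i)]]].

Definition multinom (R : realType) (theta n : nat) (l : {ffun 'I_theta -> 'I_n.+1}) : R :=
  (n`!)%:R / (\prod_(i < theta) ((l i : nat)`!))%:R.

Definition young_block (theta n : nat) (l : {ffun 'I_theta -> 'I_n.+1}) (j : 'I_theta)
  : {set 'I_n} :=
  [set x : 'I_n | (\sum_(i < theta | (i < j)%N) (l i : nat) <= x)%N
                  && (x < \sum_(i < theta | (i <= j)%N) (l i : nat))%N].

Definition young (theta n : nat) (l : {ffun 'I_theta -> 'I_n.+1}) : {set {perm 'I_n}} :=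
  [set s : {perm 'I_n} | [forall j : 'I_theta, forall x : 'I_n,
                           (x \in young_block l j) ==> (s x \in young_block l j)]].

From HB Require Import structures.
From mathcomp Require Import all_boot all_order all_algebra all_fingroup.
From mathcomp Require Import all_classical all_reals all_analysis.
From mathcomp Require Import zify.
Import Order.TTheory GRing.Theory Num.Theory.
Set Implicit Arguments. Unset Strict Implicit. Unset Printing Implicit Defensive.
Local Open Scope ring_scope.

(* Expanding every cycle factor [\sum_i p_i^|g|] of the left-hand side turns it
   into a sum over pairs (s, c) of a permutation s and a colouring
   c : V -> {1..theta} that s preserves.  Exchanging the sums, a colouring c
   with colour counts k contributes [\prod_i p_i^(k_i)] times the f-mass of its
   stabiliser.  Since f is invariant under conjugation (relabelling the
   vertices permutes the edge processes), that mass only depends on the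
   partition sorting k and equals the f-mass of the Young subgroup; finally
   there are n!/(k_1! ... k_theta!) colourings with counts k. *)

Section CycleColourings.

Variables (n th : nat) (j0 : 'I_th).
Implicit Types (s : {perm 'I_n}) (c : {ffun 'I_n -> 'I_th}).

Definition preserves s c := [forall x, c (s x) == c x].

Lemma preservesP s c :
  reflect (forall x y, y \in porbit s x -> c y = c x) (preserves s c).
Proof.
apply: (iffP forallP) => [cs x _ /porbitP [k ->] | cs x].
  elim: k => [|k IHk]; first by rewrite expg0 perm1.
  by rewrite expgSr permM (eqP (cs _)).
by apply/eqP/cs; have := mem_porbit s 1 x; rewrite expg1.
Qed.

Lemma porbit_next s x : porbit s (s x) = porbit s x.
Proof. by have := porbit_perm s 1 x; rewrite expg1. Qed.

Definition colouring_of_cycles (f : {ffun {set 'I_n} -> 'I_th}) s : {ffun 'I_n -> 'I_th} :=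
  [ffun x => f (porbit s x)].

Definition cycle_colours s c : {ffun {set 'I_n} -> 'I_th} :=
  [ffun g => if g \in porbits s then
               if [pick x in g] is Some x then c x else j0 else j0].

Lemma colouring_of_cycles_preserves s f : preserves s (colouring_of_cycles f s).
Proof. by apply/forallP => x; rewrite !ffunE porbit_next. Qed.

Lemma colouring_of_cyclesK s c :
  preserves s c -> colouring_of_cycles (cycle_colours s c) s = c.
Proof.
move/preservesP=> cs; apply/ffunP => x; rewrite !ffunE imset_f //.
case: pickP => [y | /(_ x)]; last by rewrite porbit_id.
by rewrite porbit_sym => /cs.
Qed.

Lemma cycle_coloursK s f :
  (cycle_colours s (colouring_of_cycles f s) == f)
  = (f \in pffun_on j0 (mem (porbits s)) predT).
Proof.
apply/eqP/pffun_onP => [<- | [supp _]].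
  split=> [|_ _] //; apply/fintype.subsetP => g; rewrite !inE ffunE.
  by case: ifP; rewrite ?eqxx.
apply/ffunP => g; rewrite ffunE; case: ifP => [/imsetP [y _ ->] | gs].
  case: pickP => [x | /(_ y)]; last by rewrite porbit_id.
  by rewrite ffunE -eq_porbit_mem => /eqP ->.
by apply/esym/eqP; apply: contraFT gs => /(fintype.subsetP supp).
Qed.

Lemma prod_porbits_pow (R : comPzSemiRingType) (F : {set 'I_n} -> R) s :
  \prod_(g in porbits s) F g ^+ #|g| = \prod_x F (porbit s x).
Proof.
rewrite (partition_big (porbit s) (mem (porbits s))) => [|x _]; last exact: imset_f.
apply: eq_big => [// | _ /imsetP [y _ ->]].
rewrite -prodr_const; apply: eq_big => x; rewrite /= -eq_porbit_mem //.
by move=> /eqP ->.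
Qed.

Lemma prod_porbits_sum_pow (R : comPzSemiRingType) (q : 'I_th -> R) s :
  \prod_(g in porbits s) \sum_(i < th) q i ^+ #|g|
  = \sum_(c | preserves s c) \prod_x q (c x).
Proof.
rewrite (big_distr_big j0) /=.
rewrite (reindex_onto (colouring_of_cycles^~ s) (cycle_colours s)) /=; last first.
  exact: colouring_of_cyclesK.
apply: eq_big => f; first by rewrite colouring_of_cycles_preserves cycle_coloursK.
by rewrite prod_porbits_pow => _; apply: eq_bigr => x _; rewrite ffunE.
Qed.

End CycleColourings.

Section ConjugationInvariance.

Variable n : nat.
Implicit Types (s pi : {perm 'I_n}) (e : 'I_n * 'I_n).

Definition edge_conj pi e : 'I_n * 'I_n :=
  if (pi e.1 < pi e.2)%N then (pi e.1, pi e.2) else (pi e.2, pi e.1).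

Lemma tperm_edge_conj pi e :
  tperm (edge_conj pi e).1 (edge_conj pi e).2 = (tperm e.1 e.2 ^ pi)%g.
Proof. by rewrite tpermJ /edge_conj; case: ifP => // _; rewrite tpermC. Qed.

Lemma edge_conj_mem pi e : e \in edge_set n -> edge_conj pi e \in edge_set n.
Proof.
case: e => a b; rewrite !inE /edge_conj /= => ab.
have [//|//|eq_ab] := ltngtP (pi a) (pi b).
by move: ab; rewrite (perm_inj (val_inj eq_ab)) ltnn.
Qed.

Lemma edge_conjK pi e : e \in edge_set n -> edge_conj pi^-1 (edge_conj pi e) = e.
Proof.
case: e => a b; rewrite inE /edge_conj /= => ab.
by have [h|h] := ltnP (pi a) (pi b); rewrite /= !permK ?ab // ltnNge ltnW.
Qed.

Definition walk_conj k pi (w : {ffun 'I_k -> 'I_n * 'I_n}) :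
  {ffun 'I_k -> 'I_n * 'I_n} := [ffun i => edge_conj pi (w i)].

Lemma walk_permJ k pi (w : {ffun 'I_k -> 'I_n * 'I_n}) :
  walk_perm (walk_conj pi w) = (walk_perm w ^ pi)%g.
Proof.
rewrite /walk_perm (big_morph (conjg^~ pi) (fun x y => conjMg x y pi) (conj1g pi)).
by apply: eq_bigr => i _; rewrite ffunE tperm_edge_conj.
Qed.

Lemma walk_count_leJ k s pi : (walk_count k s <= walk_count k (s ^ pi)%g)%N.
Proof.
rewrite /walk_count.
set A := [set w | _].
have conjK : {in A, cancel (walk_conj pi) (walk_conj pi^-1)}.
  move=> w; rewrite inE => /andP [/forallP wE _].
  by apply/ffunP => i; rewrite !ffunE edge_conjK.
rewrite -(card_in_imset (can_in_inj conjK)); apply: subset_leq_card.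
apply/fintype.subsetP => _ /imsetP [w + ->]; rewrite !inE => /andP [/forallP wE /eqP ws].
rewrite walk_permJ ws eqxx andbT; apply/forallP => i.
by rewrite ffunE edge_conj_mem.
Qed.

Lemma walk_countJ k s pi : walk_count k (s ^ pi)%g = walk_count k s.
Proof.
apply/eqP; rewrite eqn_leq walk_count_leJ andbT.
by have := walk_count_leJ k (s ^ pi)%g pi^-1; rewrite -conjgM mulgV conjg1.
Qed.

Lemma fpermJ (R : realType) (beta : R) s pi : fperm beta (s ^ pi)%g = fperm beta s.
Proof. by rewrite /fperm; under eq_fun do rewrite walk_countJ. Qed.

End ConjugationInvariance.

Section Reorderings.

Variables (th n : nat).
Implicit Types (l k : {ffun 'I_th -> 'I_n.+1}).

Lemma KsetP l k :
  reflect (exists t : {perm 'I_th}, forall i, k i = l (t i)) (k \in Kset l).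
Proof.
rewrite inE; apply: (iffP existsP) => [[t /forallP kt] | [t kt]].
  by exists t => i; apply/eqP.
by exists t; apply/forallP => i; rewrite kt.
Qed.

Lemma big_Kset (R : Type) (idx : R) (op : Monoid.com_law idx)
    (F : 'I_n.+1 -> R) l k :
  k \in Kset l -> \big[op/idx]_i F (k i) = \big[op/idx]_i F (l i).
Proof.
case/KsetP=> t kt; rewrite [RHS](reindex_inj (@perm_inj _ t)) /=.
by apply: eq_bigr => i _; rewrite kt.
Qed.

Lemma Kset_composition l k :
  k \in Kset l -> is_composition k = is_composition l.
Proof. by move=> kl; rewrite /is_composition (big_Kset _ (fun m => m : nat) kl). Qed.

End Reorderings.

Section Content.

Variables (n th : nat).
Implicit Types (c : {ffun 'I_n -> 'I_th}) (i : 'I_th).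

Definition colour_count c i : nat := #|[set x | c x == i]|.

Definition content c : {ffun 'I_th -> 'I_n.+1} :=
  [ffun i => inord (colour_count c i)].

Lemma contentE c i : content c i = colour_count c i :> nat.
Proof.
rewrite ffunE inordK // ltnS -[leqRHS](card_ord n); exact: max_card.
Qed.

Lemma colour_countE c i : colour_count c i = (\sum_x (c x == i))%N.
Proof.
rewrite /colour_count -sum1_card big_mkcond /=.
by apply: eq_bigr => x _; rewrite inE; case: (c x == i).
Qed.

Lemma content_composition c : is_composition (content c).
Proof.
apply/eqP; rewrite -[RHS](card_ord n) -sum1_card.
rewrite (partition_big c xpredT) //=; apply: eq_bigr => i _.
by rewrite contentE /colour_count -sum1_card; apply: eq_bigl => x; rewrite inE.
Qed.

Lemma prod_content (R : comPzSemiRingType) (q : 'I_th -> R) c :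
  \prod_x q (c x) = \prod_i q i ^+ content c i.
Proof.
rewrite (partition_big c xpredT) //=; apply: eq_bigr => i _.
rewrite contentE /colour_count -prodr_const; apply: eq_big => [x | x /eqP ->] //.
by rewrite inE.
Qed.

Lemma colour_count_relabel (t : {perm 'I_th}) c i :
  colour_count [ffun x => t (c x)] (t i) = colour_count c i.
Proof. by apply: eq_card => x; rewrite !inE ffunE (inj_eq perm_inj). Qed.

Lemma preserves_relabel (t : {perm 'I_th}) s c :
  preserves s [ffun x => t (c x)] = preserves s c.
Proof. by apply: eq_forallb => x; rewrite !ffunE (inj_eq perm_inj). Qed.

Lemma same_colour_count_conj c1 c2 :
  (forall i, colour_count c1 i = colour_count c2 i) ->
  exists pi : {perm 'I_n}, forall x, c2 (pi x) = c1 x.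
Proof.
move=> c12.
pose class c i := enum [set x | c x == i].
pose f x := nth x (class c2 (c1 x)) (index x (class c1 (c1 x))).
have size_class i : size (class c1 i) = size (class c2 i) by rewrite -!cardE; apply: c12.
have in_class x : x \in class c1 (c1 x) by rewrite mem_enum inE.
have index_lt x : (index x (class c1 (c1 x)) < size (class c2 (c1 x)))%N.
  by rewrite -size_class index_mem.
have c2f x : c2 (f x) = c1 x.
  by have /(mem_nth x) := index_lt x; rewrite /class mem_enum inE => /eqP.
have f_inj : injective f.
  move=> x y fxy; have c1xy : c1 x = c1 y by rewrite -c2f fxy c2f.
  have := in_class x; have := index_lt x; rewrite c1xy => ltx inx.
  move: fxy; rewrite /f c1xy (set_nth_default y x) // => /eqP.
  rewrite nth_uniq ?enum_uniq // ?index_lt // => /eqP ixy.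
  by rewrite -(nth_index y inx) ixy nth_index.
by exists (perm f_inj) => x; rewrite permE c2f.
Qed.

Lemma sum_preserves_conj (R : nmodType) (F : {perm 'I_n} -> R) c1 c2
    (pi : {perm 'I_n}) :
  (forall s t, F (s ^ t)%g = F s) -> (forall x, c2 (pi x) = c1 x) ->
  \sum_(s | preserves s c1) F s = \sum_(s | preserves s c2) F s.
Proof.
move=> FJ c21; rewrite (reindex_inj (conjg_inj pi^-1%g)) /=.
apply: eq_big => [s | s _]; last by rewrite FJ.
have conjE x : (s ^ pi^-1)%g x = pi^-1%g (s (pi x)) by rewrite /conjg !permM invgK.
apply/forallP/forallP => cs x.
  by have := cs (pi^-1%g x); rewrite conjE permKV -!c21 !permKV.
by rewrite conjE -!c21 permKV (cs (pi x)).
Qed.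

Lemma sum_preserves_content (R : nmodType) (F : {perm 'I_n} -> R) c1 c2 :
  (forall s t, F (s ^ t)%g = F s) -> content c1 \in Kset (content c2) ->
  \sum_(s | preserves s c1) F s = \sum_(s | preserves s c2) F s.
Proof.
move=> FJ /KsetP [t c12]; set c1t := [ffun x => t (c1 x)].
have [pi c2pi] : exists pi : {perm 'I_n}, forall x, c2 (pi x) = c1t x.
  apply: same_colour_count_conj => j; rewrite -[j](permKV t).
  by rewrite colour_count_relabel -!contentE c12.
rewrite -(eq_bigl _ _ (preserves_relabel t ^~ c1)).
exact: sum_preserves_conj FJ c2pi.
Qed.

End Content.

Lemma card_ord_interval n a b :
  (b <= n)%N -> #|[set x : 'I_n | (a <= x < b)%N]| = (b - a)%N.
Proof.
move=> bn; rewrite -sum1_card (eq_bigl (fun x : 'I_n => (x < b) && (a <= x))%N).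
  rewrite -(big_geq_mkord _ _ (fun i => i < b)%N (fun=> 1%N)).
  by rewrite -(big_nat_widen _ _ _ xpredT (fun=> 1%N)) // sum_nat_const_nat muln1.
by move=> x; rewrite inE andbC.
Qed.

Section YoungSubgroup.

Variables (th n : nat) (j0 : 'I_th) (l : {ffun 'I_th -> 'I_n.+1}).
Hypothesis l_comp : is_composition l.

Definition block_start (j : nat) : nat := (\sum_(i < th | (i < j)%N) l i)%N.

Lemma block_start_mono : {homo block_start : j k / (j <= k)%N}.
Proof.
move=> j k jk; rewrite [leqLHS]big_mkcond [leqRHS]big_mkcond.
by apply: leq_sum => i _; case: ifP => // ij; rewrite (leq_trans ij jk).
Qed.

Lemma block_startS (j : 'I_th) : block_start j.+1 = (block_start j + l j)%N.
Proof.
rewrite /block_start (bigD1 j) //= addnC; congr (_ + _)%N.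
by apply: eq_bigl => i; rewrite ltnS ltn_neqAle andbC.
Qed.

Lemma block_start_last : block_start th = n.
Proof.
by rewrite -[RHS](eqP l_comp); apply: eq_bigl => i; rewrite ltn_ord.
Qed.

Lemma young_blockE j x :
  (x \in young_block l j) = (block_start j <= x < block_start j.+1)%N.
Proof. by rewrite inE. Qed.

Lemma young_block_unique x j k :
  x \in young_block l j -> x \in young_block l k -> j = k.
Proof.
rewrite !young_blockE => /andP [jx xj] /andP [kx xk].
have [jk | kj | /val_inj //] := ltngtP j k.
- by have := block_start_mono jk; lia.
- by have := block_start_mono kj; lia.
Qed.

Lemma young_block_exists x : exists j, x \in young_block l j.
Proof.
pose P m := (m < th)%N && (block_start m <= x)%N.
have exP : exists m, P m.
  by exists 0%N; rewrite /P (leq_ltn_trans _ (ltn_ord j0)) // /block_start big1.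
have ubP m : P m -> (m <= th)%N by case/andP => /ltnW.
have [m /andP [m_th mx] m_max] := ex_maxnP exP ubP.
exists (Ordinal m_th); rewrite young_blockE mx /=.
have [m1_th | th_m1] := ltnP m.+1 th.
  rewrite ltnNge; apply/negP => m1x.
  by have := m_max m.+1; rewrite /P m1_th m1x ltnn => /(_ isT).
have -> : m.+1 = th by apply/eqP; rewrite eqn_leq m_th th_m1.
by rewrite block_start_last.
Qed.

Definition young_colouring : {ffun 'I_n -> 'I_th} :=
  [ffun x => odflt j0 [pick j | x \in young_block l j]].

Lemma young_colouringP x j : (young_colouring x == j) = (x \in young_block l j).
Proof.
rewrite ffunE; case: pickP => [k xk | none] /=.
  by apply/eqP/idP => [<- // | /(young_block_unique xk)].
by have [k xk] := young_block_exists x; have := none k; rewrite xk.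
Qed.

Lemma young_preserves s : (s \in young l) = preserves s young_colouring.
Proof.
rewrite inE; apply/forallP/forallP => [sl x | sc j].
  by have /forallP/(_ x) := sl (young_colouring x); rewrite -!young_colouringP eqxx.
by apply/forallP => x; apply/implyP; rewrite -!young_colouringP (eqP (sc x)).
Qed.

Lemma content_young_colouring : content young_colouring = l.
Proof.
apply/ffunP => j; apply/val_inj; rewrite /= contentE /colour_count.
have -> : [set x | young_colouring x == j]
          = [set x : 'I_n | (block_start j <= x < block_start j.+1)%N].
  by apply/setP => x; rewrite !inE young_colouringP young_blockE.
rewrite card_ord_interval ?block_startS ?addKn //.
by rewrite -block_startS -block_start_last block_start_mono.
Qed.

End YoungSubgroup.

Section SortCompositions.

Variables (th n : nat).
Implicit Types (l k : {ffun 'I_th -> 'I_n.+1}) (t : {perm 'I_th}).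

Definition nonincreasing l :=
  [forall i : 'I_th, forall j : 'I_th, ((i <= j)%N ==> (l j <= l i)%N)].

Lemma nonincreasingP l :
  reflect {homo l : i j / (i <= j)%N >-> (j <= i)%N} (nonincreasing l).
Proof.
apply: (iffP forallP) => [lP i j ij | lP i]; last first.
  by apply/forallP => j; apply/implyP/lP.
by have /forallP/(_ j)/implyP := lP i; apply.
Qed.

(* A minimiser of [\sum_i i * k (t i)] lists [k] in nonincreasing order
   (rearrangement inequality). *)
Definition sort_weight k t : nat := (\sum_(i < th) i * k (t i))%N.

Definition sorting_perm k : {perm 'I_th} := arg_min 1%g xpredT (sort_weight k).

Definition sort_composition k : {ffun 'I_th -> 'I_n.+1} :=
  [ffun i => k (sorting_perm k i)].

Lemma sort_weight_tperm k t (i j : 'I_th) : i != j ->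
  (sort_weight k (tperm i j * t) + i * k (t i) + j * k (t j)
   = sort_weight k t + i * k (t j) + j * k (t i))%N.
Proof.
move=> ij.
have split2 (F : 'I_th -> nat) :
    (\sum_x F x = F i + F j + \sum_(x | (x != i) && (x != j)) F x)%N.
  by rewrite (bigD1 i) // (bigD1 j) 1?eq_sym //= addnA.
have rest : (\sum_(x | (x != i) && (x != j)) x * k ((tperm i j * t)%g x)
             = \sum_(x | (x != i) && (x != j)) x * k (t x))%N.
  by apply: eq_bigr => x /andP [xi xj]; rewrite permM tpermD // eq_sym.
rewrite /sort_weight (split2 (fun x => x * k ((tperm i j * t)%g x)))%N.
rewrite (split2 (fun x => x * k (t x)))%N rest !permM tpermL tpermR.
by move: (i * _)%N (j * _)%N (\sum_(x | _) _)%N (i * _)%N (j * _)%N => *; lia.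
Qed.

Lemma sort_composition_nonincreasing k : nonincreasing (sort_composition k).
Proof.
rewrite /sort_composition /sorting_perm; case: arg_minnP => // t _ t_min.
apply/nonincreasingP => i j; rewrite leq_eqVlt => /predU1P [/val_inj -> // | ij].
rewrite !ffunE leqNgt; apply/negP => kij.
have neq_ij : i != j by apply: contraTneq ij => ->; rewrite ltnn.
have := sort_weight_tperm k t neq_ij; have := t_min (tperm i j * t)%g isT.
move: (sort_weight _ _) (sort_weight _ _) => w w' /=.
nia.
Qed.

Lemma Kset_sort_composition k : k \in Kset (sort_composition k).
Proof. by apply/KsetP; exists (sorting_perm k)^-1%g => i; rewrite ffunE permKV. Qed.

Lemma nonincreasing_leE l (v : nat) (i : 'I_th) : nonincreasing l ->
  (v <= l i)%N = (i < #|[set j | (v <= l j)%N]|)%N.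
Proof.
move/nonincreasingP => l_dec.
have [vi | iv] := leqP v (l i); apply/esym.
  have : [set j : 'I_th | (0 <= j < i.+1)%N] \subset [set j | (v <= l j)%N].
    by apply/fintype.subsetP => j; rewrite !inE ltnS => /andP [_ /l_dec]; apply: leq_trans.
  by move/subset_leq_card; rewrite card_ord_interval.
have : [set j | (v <= l j)%N] \subset [set j : 'I_th | (0 <= j < i)%N].
  apply/fintype.subsetP => j; rewrite !inE /= ltnNge => vj.
  by apply/negP => /l_dec lji; move: iv; rewrite ltnNge (leq_trans vj lji).
move/subset_leq_card; rewrite card_ord_interval ?(ltnW (ltn_ord i)) // subn0.
by move=> card_le; apply/negbTE; rewrite -leqNgt.
Qed.

Lemma nonincreasing_Kset_eq l1 l2 :
  nonincreasing l1 -> nonincreasing l2 -> l1 \in Kset l2 -> l1 = l2.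
Proof.
move=> l1_dec l2_dec /KsetP [t l12].
have card_ge v : #|[set j | (v <= l1 j)%N]| = #|[set j | (v <= l2 j)%N]|.
  rewrite -[RHS](card_preimset _ (@perm_inj _ t)); apply: eq_card => j.
  by rewrite !inE /= l12.
apply/ffunP => i; apply/val_inj/eqP; rewrite /= eqn_leq.
rewrite (nonincreasing_leE _ _ l1_dec) card_ge -(nonincreasing_leE _ _ l2_dec) leqnn.
by rewrite (nonincreasing_leE _ _ l2_dec) -card_ge -(nonincreasing_leE _ _ l1_dec) leqnn.
Qed.

Lemma sort_compositionP l k :
  nonincreasing l -> (sort_composition k == l) = (k \in Kset l).
Proof.
move=> l_dec; apply/eqP/idP => [<- | /KsetP [t kl]].
  exact: Kset_sort_composition.
apply: nonincreasing_Kset_eq (sort_composition_nonincreasing k) l_dec _.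
by apply/KsetP; exists (sorting_perm k * t)%g => i; rewrite ffunE kl permM.
Qed.

End SortCompositions.

Section ColouringCount.

Variable th : nat.
Implicit Types (k : 'I_th -> nat) (x i : 'I_th).

Definition colourings_with_counts n k : {set {ffun 'I_n -> 'I_th}} :=
  [set c | [forall i, colour_count c i == k i]].

Definition ffun_cons n x (g : {ffun 'I_n -> 'I_th}) : {ffun 'I_n.+1 -> 'I_th} :=
  [ffun j => if unlift ord0 j is Some j' then g j' else x].

Lemma ffun_cons_bij n : bijective (fun xg => @ffun_cons n xg.1 xg.2).
Proof.
exists (fun c : {ffun 'I_n.+1 -> 'I_th} => (c ord0, [ffun j => c (lift ord0 j)])).
  move=> [x g] /=; congr (_, _); first by rewrite ffunE unlift_none.
  by apply/ffunP => j; rewrite !ffunE liftK.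
by move=> c; apply/ffunP => j; rewrite ffunE; case: unliftP => [j' -> | ->]; rewrite ?ffunE.
Qed.

Lemma colour_count_cons n x g i :
  colour_count (@ffun_cons n x g) i = ((x == i) + colour_count g i)%N.
Proof.
rewrite !colour_countE big_ord_recl ffunE unlift_none; congr (_ + _)%N.
by apply: eq_bigr => j _; rewrite ffunE liftK.
Qed.

Lemma card_colourings_with_countsS n k :
  #|colourings_with_counts n.+1 k|
  = (\sum_x (0 < k x) * #|colourings_with_counts n (fun i => k i - (x == i))|)%N.
Proof.
rewrite -sum1_card (reindex _ (onW_bij _ (ffun_cons_bij n))) /=.
rewrite -(pair_big_dep xpredT (fun x g => ffun_cons x g \in colourings_with_counts n.+1 k)
            (fun _ _ => 1%N)) /=.
apply: eq_bigr => x _; rewrite sum1_card.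
have consE g : (ffun_cons x g \in colourings_with_counts n.+1 k)
    = (0 < k x)%N && (g \in colourings_with_counts n (fun i => k i - (x == i))%N).
  rewrite !inE; apply/forallP/andP => [cnt_k | [kx_gt0 /forallP cnt_k] i].
    split; first by have /eqP := cnt_k x; rewrite colour_count_cons eqxx; lia.
    apply/forallP => i; have /eqP := cnt_k i; rewrite colour_count_cons.
    by case: (x == i) => /= ?; apply/eqP; lia.
  rewrite colour_count_cons; have /eqP := cnt_k i.
  by case: eqVneq => [<- | _] /= ?; apply/eqP; lia.
rewrite (eq_card consE); case: (0 < k x)%N; first by rewrite mul1n.
by rewrite mul0n; apply: eq_card0.
Qed.

Lemma card_colourings_with_counts n k : (\sum_i k i)%N = n ->
  (#|colourings_with_counts n k| * \prod_i (k i)`!)%N = n`!.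
Proof.
elim: n k => [|n IHn] k sum_k.
  have k0 i : k i = 0%N by move/eqP: sum_k; rewrite sum_nat_eq0 => /forallP/(_ i)/eqP.
  rewrite big1 ?muln1 => [|i _]; last by rewrite k0.
  have -> : colourings_with_counts 0 k = [set: {ffun 'I_0 -> 'I_th}].
    by apply/setP => c; rewrite !inE; apply/forallP => i; rewrite colour_countE big_ord0 k0.
  by rewrite cardsT card_ffun !card_ord.
rewrite card_colourings_with_countsS big_distrl /= factS -sum_k big_distrl /=.
apply: eq_bigr => x _; case: posnP => [-> // | kx_gt0].
pose k' i := (k i - (x == i))%N.
have sum_k' : (\sum_i k' i)%N = n.
  move: sum_k; rewrite (bigD1 x) //= => sum_k.
  rewrite (bigD1 x) //= /k' eqxx (eq_bigr k) => [|i]; first lia.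
  by rewrite eq_sym => /negbTE ->; rewrite subn0.
rewrite mul1n -(IHn k' sum_k') mulnCA; congr (_ * _)%N.
have fact_kx : (k x)`! = (k x * (k x - 1)`!)%N.
  by case: (k x) kx_gt0 => // m _; rewrite factS subn1.
rewrite (bigD1 x) //= [in RHS](bigD1 x) //= /k' eqxx fact_kx -mulnA.
congr (_ * (_ * _))%N.
by apply: eq_bigr => i; rewrite eq_sym => /negbTE ->; rewrite subn0.
Qed.

End ColouringCount.

Section GroupByContent.

Variables (th n : nat).
Implicit Types (c : {ffun 'I_n -> 'I_th}) (l k : {ffun 'I_th -> 'I_n.+1}).

Lemma card_content_eq (R : realType) l k : is_composition l -> k \in Kset l ->
  #|[set c | content c == k]|%:R = multinom R l :> R.
Proof.
move=> l_comp kl.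
have k_comp : is_composition k by rewrite (Kset_composition kl).
have -> : [set c | content c == k] = colourings_with_counts n (fun i => k i).
  apply/setP => c; rewrite !inE; apply/eqP/forallP => [<- i | ck].
    by rewrite contentE.
  by apply/ffunP => i; apply/val_inj; rewrite /= contentE (eqP (ck i)).
rewrite /multinom -(card_colourings_with_counts (eqP k_comp)).
rewrite (big_Kset _ (fun m : 'I_n.+1 => m`!) kl) natrM mulfK //.
by rewrite pnatr_eq0 -lt0n prodn_gt0 // => i; rewrite fact_gt0.
Qed.

Lemma sum_by_content (R : realType) (G : {ffun 'I_th -> 'I_n.+1} -> R) :
  \sum_c G (content c)
  = \sum_(l | is_partition l) multinom R l * \sum_(k in Kset l) G k.
Proof.
rewrite (partition_big (fun c => sort_composition (content c)) (@is_partition th n));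
  last first.
  move=> c _; apply/andP; split; last exact: sort_composition_nonincreasing.
  by rewrite -(Kset_composition (Kset_sort_composition _)) content_composition.
apply: eq_bigr => l /andP [l_comp l_dec].
rewrite (partition_big (@content n th) (mem (Kset l))) => [|c]; last first.
  by rewrite /= sort_compositionP.
rewrite mulr_sumr; apply: eq_bigr => k /= kl.
rewrite (eq_bigl (mem [set c | content c == k])) => [|c]; last first.
  by rewrite /= sort_compositionP // [RHS]inE andb_idl // => /eqP ->.
rewrite (eq_bigr (fun=> G k)) => [|c /[!inE] /eqP -> //].
by rewrite sumr_const -mulr_natl (card_content_eq _ l_comp kl).
Qed.

Lemma sum_preserves_young (R : nmodType) (j0 : 'I_th) (F : {perm 'I_n} -> R) c :
  (forall s t, F (s ^ t)%g = F s) ->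
  \sum_(s | preserves s c) F s
  = \sum_(s in young (sort_composition (content c))) F s.
Proof.
move=> FJ; set l := sort_composition (content c).
have l_comp : is_composition l.
  by rewrite -(Kset_composition (Kset_sort_composition _)) content_composition.
rewrite (eq_bigl _ _ (young_preserves j0 l_comp)).
apply: sum_preserves_content FJ _.
by rewrite content_young_colouring // Kset_sort_composition.
Qed.

End GroupByContent.

Unset Implicit Arguments.

Theorem lemma2p1 (R : realType) (theta n : nat) (beta : R)
    (p : 'I_theta -> R) :
  (2 <= theta)%N -> 0 < beta ->
  (forall i, 0 <= p i) -> \sum_(i < theta) p i = 1 ->
  Eperm beta (fun s : {perm 'I_n} =>
                \prod_(g in porbits s) \sum_(i < theta) p i ^+ #|g|)
  = \sum_(l : {ffun 'I_theta -> 'I_n.+1} | is_partition l)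
      multinom R l
      * (\sum_(k in Kset l) \prod_(i < theta) p i ^+ (k i : nat))
      * \sum_(s in young l) fperm beta s.
Proof.
(* The identity holds for any [p] and [beta]; only [0 < theta] is used, to
   have a default colour. *)
move=> theta_ge2 _ _ _; have j0 : 'I_theta := Ordinal (ltnW theta_ge2).
rewrite /Eperm; under eq_bigr do rewrite (prod_porbits_sum_pow j0) big_distrr /=.
rewrite (exchange_big_dep xpredT) //=.
under eq_bigr => c _.
  rewrite -big_distrl /= (sum_preserves_young j0 _ (@fpermJ _ _ _)) prod_content mulrC.
  over.
rewrite (sum_by_content (fun k => \prod_i p i ^+ k i
                          * \sum_(s in young (sort_composition k)) fperm beta s)).
apply: eq_bigr => l /andP [_ l_dec]; rewrite -mulrA mulr_suml; congr (_ * _).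
by apply: eq_bigr => k kl; move: (kl); rewrite -sort_compositionP // => /eqP ->.
Qed.
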